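(* Let $\mathcal{O}$ be the ring of integers of $\mathbb{Q}(\sqrt{-11})$ and $X=\frac12(1+\sqrt{-11})$. Let $n\ge0$ and $z=\sum_{j=0}^n\alpha_jX^j\in\mathcal{O}$ with $\alpha_j\in\{-1,0,1\}$. Then there exist $\beta_j\in\{-1,0,1\}$, $0\le j\le n+2$, such that $z+1=\sum_{j=0}^{n+2}\beta_jX^j$. *)

From mathcomp Require Import all_boot all_order all_algebra all_field.
Set Implicit Arguments. Unset Strict Implicit. Unset Printing Implicit Defensive.
Import Order.TTheory GRing.Theory Num.Theory.
Local Open Scope ring_scope.

(* We work inside algC (algebraic complex numbers), which contains
   Q(sqrt(-11)) and its ring of integers O = Z[X]. *)
Definition Xq : algC := (1 + sqrtC (- 11%:R)) / 2%:R.

Definition digit (a : int) : bool := a \in [:: (-1)%R; 0%R; 1%R].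

(* Since X^2 = X - 3, a carry a + bX meeting a digit d can be pushed one
   place up: d + a = e - 3b' with e in {-1, 0, 1}, and then
   d + a + bX = e + X (a' + b'X) with a' = b - b'.  The carries with a, b and
   a + b all in {-1, 0, 1} are closed under this step, and 1 is one of them;
   after the last digit of z the remaining carry a + bX supplies two more
   digits. *)

From mathcomp Require Import all_boot all_order all_algebra all_field.
From mathcomp Require Import ring zify.
Import Order.TTheory GRing.Theory Num.Theory.
Local Open Scope ring_scope.

Lemma digitE (a : int) : digit a = (-1 <= a <= 1).
Proof. by rewrite /digit !inE; lia. Qed.

Definition carry (a b : int) : bool := [&& digit a, digit b & digit (a + b)].

Section CarryPropagation.
Variables (R : comPzRingType) (x : R).

Lemma sum_powers_recl (f : nat -> R) (n : nat) :
  \sum_(0 <= j < n.+1) f j * x ^+ j = f 0%N + x * \sum_(0 <= j < n) f j.+1 * x ^+ j.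
Proof.
rewrite big_nat_recl // expr0 mulr1 mulr_sumr; congr (_ + _).
by apply: eq_bigr => j _; rewrite exprS mulrCA.
Qed.

Hypothesis x_sqr : x ^+ 2 = x - 3%:R.

Lemma carry_identity (d a b q : int) :
  d%:~R + (a%:~R + b%:~R * x)
    = (d + a - 3 * q)%:~R + x * ((b + q)%:~R + (- q)%:~R * x).
Proof.
rewrite mulrDr mulrCA -expr2 x_sqr !rmorphD !rmorphN rmorphM /=.
ring.
Qed.

Lemma carry_step (d a b : int) : digit d -> carry a b ->
  exists e a' b', [/\ digit e, carry a' b' &
    d%:~R + (a%:~R + b%:~R * x) = e%:~R + x * (a'%:~R + b'%:~R * x)].
Proof.
move=> dd cab.
pose q : int := if d + a == 2 then 1 else if d + a == -2 then -1 else 0.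
exists (d + a - 3 * q), (b + q), (- q); split; last exact: carry_identity.
all: by move: dd cab; rewrite /carry /q !digitE; case: ifP; [|case: ifP]; lia.
Qed.

Lemma carry_expansion (n : nat) (alpha : nat -> int) (a b : int) :
  (forall j, (j < n)%N -> digit (alpha j)) -> carry a b ->
  exists beta : nat -> int, (forall j, (j < n.+2)%N -> digit (beta j)) /\
    \sum_(0 <= j < n) (alpha j)%:~R * x ^+ j + (a%:~R + b%:~R * x)
      = \sum_(0 <= j < n.+2) (beta j)%:~R * x ^+ j.
Proof.
elim: n alpha a b => [|n IHn] alpha a b dalpha cab.
  exists (fun j => if j == 0%N then a else if j == 1%N then b else 0); split.
    by move: cab; rewrite /carry => /and3P[da db _] [|[|[|j]]].
  by rewrite big_geq // add0r !sum_powers_recl big_geq //= mulr0 addr0 mulrC.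
have [e [a' [b' [de ca'b' Estep]]]] := @carry_step _ a b (dalpha 0%N isT) cab.
have [gamma [dgamma Egamma]] :=
  IHn (fun j => alpha j.+1) a' b' (fun j => dalpha j.+1) ca'b'.
exists (fun j => if j is j'.+1 then gamma j' else e); split; first by case.
rewrite [in LHS]sum_powers_recl addrAC Estep -addrA -mulrDr.
by rewrite sum_powers_recl -Egamma; congr (_ + _ * _); exact: addrC.
Qed.

End CarryPropagation.

Lemma Xq_sqr : Xq ^+ 2 = Xq - 3%:R.
Proof.
have s_sqr : sqrtC (- 11%:R) ^+ 2 = - 11%:R :> algC by rewrite sqrtCK.
by rewrite /Xq; field: s_sqr.
Qed.

Theorem lemma6p7 (n : nat) (alpha : nat -> int) :
  (forall j, (j <= n)%N -> digit (alpha j)) ->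
  exists beta : nat -> int,
    (forall j, (j <= n.+2)%N -> digit (beta j)) /\
    (\sum_(0 <= j < n.+1) (alpha j)%:~R * Xq ^+ j) + 1
      = \sum_(0 <= j < n.+3) (beta j)%:~R * Xq ^+ j.
Proof.
move=> dalpha.
have [beta [dbeta Ebeta]] := @carry_expansion _ _ Xq_sqr n.+1 alpha 1 0 dalpha isT.
by exists beta; rewrite -Ebeta mul0r addr0.
Qed.
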